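(* For every set $S$, the family of maps $\iota\colon H_SX\to X\uplus(S\uplus\{\bot\})$ is a monad morphism from $\mathbb{H}_S$ to the exception monad $(-)\uplus(S\uplus\{\bot\})$.
   Context: $H_SX=\sum_{d\in\mathbb{R}_{\ge0}}S^{[0,d)}\times X\ \cup\ \sum_{I}S^{I}$, $I$ ranging over intervals $[0,d]$ ($d\in\mathbb{R}_{\ge0}$) and $[0,d)$ ($d\in\mathbb{R}_{\ge0}\cup\{\infty\}$); elements $\langle I,e,x\rangle$ and $\langle I,e\rangle$. Concatenation $\langle[0,d_1),e_1\rangle\frown\langle J,e_2\rangle=\langle J',\lambda t.\,\text{if }t<d_1\text{ then }e_1(t)\text{ else }e_2(t-d_1)\rangle$ with $J'=[0,d_1+d_2)$ or $[0,d_1+d_2]$ according as $J=[0,d_2)$ or $[0,d_2]$. Monad $\mathbb{H}_S$: $\eta(x)=\langle\emptyset,!,x\rangle$; $f^\star\langle I,e,x\rangle=\langle(I,e)\frown(J,e'),y\rangle$ if $f(x)=\langle J,e',y\rangle$, $=(I,e)\frown(J,e')$ if $f(x)=\langle J,e'\rangle$; $f^\star\langle I,e\rangle=\langle I,e\rangle$. Exception monad $(-)\uplus E$: unit $\mathsf{inl}$, lifting $f^\star=[f,\mathsf{inr}]$. Define $\iota(I,e,x)=\mathsf{inr}\,\mathsf{inl}\,e(0)$ if $I\ne\emptyset$ and $\mathsf{inl}\,x$ otherwise; $\iota(I,e)=\mathsf{inr}\,\mathsf{inl}\,e(0)$ if $I\neq\emptyset$ and $\mathsf{inr}\,\mathsf{inr}\,\bot$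 otherwise. A monad morphism is a natural transformation $\theta$ with $\theta\cdot\eta=\eta'$ and $\theta\cdot f^\star=(\theta\cdot f)^{\star'}\cdot\theta$. *)

From Stdlib Require Import Reals Lra ClassicalEpsilon.
Open Scope R_scope.
Set Implicit Arguments.

Inductive ival : Type := Ico (d : R) | Icc (d : R) | Ico_inf.

Definition in_ival (I : ival) (t : R) : Prop :=
  match I with
  | Ico d => 0 <= t < d
  | Icc d => 0 <= t <= d
  | Ico_inf => 0 <= t
  end.

Definition ival_ok (I : ival) : Prop :=
  match I with
  | Ico d => 0 <= d
  | Icc d => 0 <= d
  | Ico_inf => True
  end.

(* elements of H_S X:
   Conv d _ e x  = <[0,d), e, x>   (terminating, d >= 0 finite)
   Div I _ e     = <I, e>          (I = [0,d], [0,d) or [0,oo)) *)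
Inductive H (S X : Type) : Type :=
| Conv (d : R) (hd : 0 <= d) (e : {t : R | in_ival (Ico d) t} -> S) (x : X)
| Div (I : ival) (hI : ival_ok I) (e : {t : R | in_ival I t} -> S).

Arguments Conv {S X} d hd e x.
Arguments Div {S X} I hI e.

(* J' for [0,d1) ⌢ J *)
Definition shift (d1 : R) (J : ival) : ival :=
  match J with
  | Ico d2 => Ico (d1 + d2)
  | Icc d2 => Icc (d1 + d2)
  | Ico_inf => Ico_inf
  end.

Lemma shift_ok d1 J : 0 <= d1 -> ival_ok J -> ival_ok (shift d1 J).
Proof. destruct J; simpl; intros; lra. Qed.

Lemma in_ival_nonneg I t : in_ival I t -> 0 <= t.
Proof. destruct I; simpl; intros; lra. Qed.

Lemma cat_left d1 J t : in_ival (shift d1 J) t -> t < d1 -> in_ival (Ico d1) t.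
Proof. intros H1 H2. pose proof (in_ival_nonneg _ _ H1). simpl. lra. Qed.

Lemma cat_right d1 J t : in_ival (shift d1 J) t -> ~ t < d1 -> in_ival J (t - d1).
Proof. destruct J; simpl; intros; lra. Qed.

Definition cat {S : Type} (d1 : R) (e1 : {t : R | in_ival (Ico d1) t} -> S)
  (J : ival) (e2 : {t : R | in_ival J t} -> S) :
  {t : R | in_ival (shift d1 J) t} -> S :=
  fun t =>
    match Rlt_dec (proj1_sig t) d1 with
    | left h => e1 (exist _ (proj1_sig t) (@cat_left d1 J _ (proj2_sig t) h))
    | right h => e2 (exist _ (proj1_sig t - d1) (@cat_right d1 J _ (proj2_sig t) h))
    end.

Lemma empty_dom (t : {t : R | in_ival (Ico 0) t}) : False.
Proof. destruct t as [t Ht]; simpl in Ht; lra. Qed.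

Definition empty_fun {S : Type} : {t : R | in_ival (Ico 0) t} -> S :=
  fun t => False_rect S (empty_dom t).

Definition etaH {S X : Type} (x : X) : H S X := Conv 0 (Rle_refl 0) empty_fun x.

Definition bindH {S X Y : Type} (f : X -> H S Y) (p : H S X) : H S Y :=
  match p with
  | Conv d hd e x =>
      match f x with
      | Conv d2 hd2 e2 y =>
          Conv (d + d2) (@shift_ok d (Ico d2) hd hd2) (@cat S d e (Ico d2) e2) y
      | Div J hJ e2 => Div (shift d J) (@shift_ok d J hd hJ) (@cat S d e J e2)
      end
  | Div J0 hJ0 e0 => Div J0 hJ0 e0
  end.

Definition fmapH {S X Y : Type} (g : X -> Y) : H S X -> H S Y :=
  bindH (fun x => etaH (g x)).

Definition exc_bind {E X Y : Type} (f : X -> Y + E) (r : X + E) : Y + E :=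
  match r with inl x => f x | inr e => inr e end.

Definition exc_map {E X Y : Type} (g : X -> Y) : X + E -> Y + E :=
  exc_bind (fun x => inl (g x)).

(* iota : H_S X -> X + (S + {bot}), with {bot} = unit *)
Lemma nonempty_has0 I : (exists t, in_ival I t) -> in_ival I 0.
Proof. destruct I; simpl; intros [t Ht]; lra. Qed.

Definition iota {S X : Type} (p : H S X) : X + (S + unit) :=
  match p with
  | Conv d hd e x =>
      match excluded_middle_informative (exists t, in_ival (Ico d) t) with
      | left h => inr (inl (e (exist _ 0 (@nonempty_has0 _ h))))
      | right _ => inl x
      end
  | Div J0 hJ0 e0 =>
      match excluded_middle_informative (exists t, in_ival J0 t) with
      | left h => inr (inl (e0 (exist _ 0 (@nonempty_has0 _ h))))
      | right _ => inr (inr tt)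
      end
  end.

From Stdlib Require Import Reals Lra ProofIrrelevance ClassicalEpsilon.

(* [iota] only looks at whether a trace is empty and, if not, at its value at time 0.
   The value at time 0 of a concatenation [(I,e1) ⌢ (J,e2)] is that of [e1] unless
   [I] is empty, in which case it is the value of [e2] at time 0; this is exactly
   the case split performed by the exception monad's bind. *)

Definition trace_head {S : Type} (I : ival) (e : {t : R | in_ival I t} -> S) : option S :=
  match excluded_middle_informative (in_ival I 0) with
  | left h => Some (e (exist _ 0 h))
  | right _ => None
  end.

Lemma ival_nonempty_iff I : (exists t, in_ival I t) <-> in_ival I 0.
Proof. split; [apply nonempty_has0 | now exists 0]. Qed.

Lemma iota_match_trace_head {S A : Type} I (e : {t : R | in_ival I t} -> S)
    (found : S -> A) (empty : A) :
  match excluded_middle_informative (exists t, in_ival I t) with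
  | left h => found (e (exist _ 0 (nonempty_has0 I h)))
  | right _ => empty
  end =
  match trace_head I e with Some s => found s | None => empty end.
Proof.
  unfold trace_head.
  destruct (excluded_middle_informative (exists t, in_ival I t)) as [h|h];
    destruct (excluded_middle_informative (in_ival I 0)) as [h0|h0].
  - now rewrite (ProofIrrelevanceTheory.subset_eq_compat _ _ _ _ _ h0 eq_refl).
  - now contradict h0; apply ival_nonempty_iff.
  - now contradict h; apply ival_nonempty_iff.
  - reflexivity.
Qed.

Lemma iota_Conv {S X : Type} d hd e (x : X) :
  iota (Conv d hd e x) =
  match trace_head (S := S) (Ico d) e with Some s => inr (inl s) | None => inl x end.
Proof. exact (iota_match_trace_head _ _ _ _). Qed.

Lemma iota_Div {S X : Type} J hJ e :
  @iota S X (Div J hJ e) =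
  match trace_head J e with Some s => inr (inl s) | None => inr (inr tt) end.
Proof. exact (iota_match_trace_head J e (fun s => inr (inl s)) (inr (inr tt))). Qed.

Lemma trace_head_Ico0 {S : Type} (e : {t : R | in_ival (Ico 0) t} -> S) :
  trace_head (Ico 0) e = None.
Proof.
  unfold trace_head; destruct (excluded_middle_informative _) as [h|]; [|easy].
  exfalso; simpl in h; lra.
Qed.

Lemma trace_head_cat {S : Type} d1 e1 J e2 :
  0 <= d1 -> ival_ok J ->
  trace_head (shift d1 J) (@cat S d1 e1 J e2) =
  match trace_head (Ico d1) e1 with Some s => Some s | None => trace_head J e2 end.
Proof.
  intros hd1 hJ.
  unfold trace_head at 2.
  destruct (excluded_middle_informative (in_ival (Ico d1) 0)) as [h1|h1].
  - assert (h : in_ival (shift d1 J) 0) by (destruct J; simpl in *; lra).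
    unfold trace_head, cat; simpl.
    destruct (excluded_middle_informative _) as [h'|]; [|contradiction].
    destruct (Rlt_dec 0 d1) as [lt|ge]; [|exfalso; simpl in h1; lra].
    do 2 f_equal; now apply ProofIrrelevanceTheory.subset_eq_compat.
  - assert (d1 = 0) as -> by (simpl in h1; lra).
    assert (hshift : in_ival (shift 0 J) 0 <-> in_ival J 0)
      by (destruct J; simpl in *; split; intros; lra).
    unfold trace_head, cat; simpl.
    destruct (excluded_middle_informative (in_ival (shift 0 J) 0)) as [h|h];
      destruct (excluded_middle_informative (in_ival J 0)) as [h'|h'];
      try (exfalso; tauto); [|reflexivity].
    destruct (Rlt_dec 0 0) as [lt|ge]; [exfalso; lra|].
    do 2 f_equal; apply ProofIrrelevanceTheory.subset_eq_compat; lra.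
Qed.

Lemma iota_etaH (S X : Type) (x : X) : iota (@etaH S X x) = inl x.
Proof. unfold etaH; now rewrite iota_Conv, trace_head_Ico0. Qed.

Lemma iota_bindH (S X Y : Type) (f : X -> H S Y) (p : H S X) :
  iota (bindH f p) = exc_bind (fun x => iota (f x)) (iota p).
Proof.
  destruct p as [d hd e x | J hJ e].
  - simpl bindH; rewrite iota_Conv.
    destruct (f x) as [d2 hd2 e2 y | J hJ e2] eqn:Hf.
    + rewrite iota_Conv.
      change (Ico (d + d2)) with (shift d (Ico d2)).
      rewrite (trace_head_cat d e (Ico d2) e2 hd hd2).
      destruct (trace_head (Ico d) e); simpl; [easy | now rewrite Hf, iota_Conv].
    + rewrite iota_Div, (trace_head_cat d e J e2 hd hJ).
      destruct (trace_head (Ico d) e); simpl; [easy | now rewrite Hf, iota_Div].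
  - simpl bindH; rewrite !iota_Div; now destruct (trace_head J e).
Qed.

Theorem lemma1 (S : Type) :
  (forall (X Y : Type) (g : X -> Y) (p : H S X),
      iota (fmapH g p) = exc_map g (iota p)) /\
  (forall (X : Type) (x : X), iota (@etaH S X x) = inl x) /\
  (forall (X Y : Type) (f : X -> H S Y) (p : H S X),
      iota (bindH f p) = exc_bind (fun x => iota (f x)) (iota p)).
Proof.
  split; [|split; [apply iota_etaH | apply iota_bindH]].
  intros X Y g p; unfold fmapH, exc_map.
  rewrite iota_bindH.
  destruct (iota p); simpl; [apply iota_etaH | reflexivity].
Qed.
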